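(* Let $\Sigma$ be an alphabet, $\triangleleft\notin\Sigma$, and let $L\subseteq\Sigma^*$ be context-free. Then the language $$\mathrm{Next}(L)=\bigcup_{n\in\mathbb N}\bigl\{\langle\sigma_2,\sigma_1\rangle\cdots\langle\sigma_n,\sigma_{n-1}\rangle\langle\triangleleft,\sigma_n\rangle \;\big|\; \sigma_1,\dots,\sigma_n\in\Sigma,\ \sigma_1\cdots\sigma_n\in L\bigr\}$$ over the alphabet $(\Sigma\cup\{\triangleleft\})\times\Sigma$ is context-free. *)

From mathcomp Require Import all_boot.
From Stdlib Require Import Relation_Operators.

Set Implicit Arguments.
Unset Strict Implicit.
Unset Printing Implicit Defensive.

Record cfg (N T : finType) := CFG {
  cfg_start : N;
  cfg_prods : seq (N * seq (N + T))
}.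

Definition cfg_step (N T : finType) (G : cfg N T) (s s' : seq (N + T)) : Prop :=
  exists (u v : seq (N + T)) (A : N) (rhs : seq (N + T)),
    (A, rhs) \in cfg_prods G /\ s = u ++ inl A :: v /\ s' = u ++ rhs ++ v.

Definition cfg_derives (N T : finType) (G : cfg N T) : seq (N + T) -> seq (N + T) -> Prop :=
  clos_refl_trans _ (@cfg_step N T G).

Definition cfg_lang (N T : finType) (G : cfg N T) (w : seq T) : Prop :=
  cfg_derives G [:: inl (cfg_start G)] (map inr w).

Definition context_free (T : finType) (L : seq T -> Prop) : Prop :=
  exists (N : finType) (G : cfg N T), forall w, L w <-> cfg_lang G w.

(* The end marker \triangleleft is modelled by None in option Sigma.
   For s = s_1 ... s_n, next_word s = <s_2,s_1> ... <s_n,s_{n-1}> <None,s_n>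
   (and the empty word when n = 0). *)
Definition next_word (S : finType) (s : seq S) : seq (option S * S) :=
  zip (rcons (map Some (behead s)) None) s.

Definition Next (S : finType) (L : seq S -> Prop) (w : seq (option S * S)) : Prop :=
  exists s, L s /\ w = next_word s.

From mathcomp Require Import all_boot.
From Stdlib Require Import Relation_Operators Operators_Properties.

Set Implicit Arguments.
Unset Strict Implicit.
Unset Printing Implicit Defensive.

(* In Next(L) each letter of a word of L is paired with its right neighbour,
   so it suffices to let the grammar guess neighbours consistently. Every
   nonterminal A is refined to triples (A, f, e), where e is the letter that
   follows the yield w of A (None for the end marker) and f is the first
   letter of w e; (A, f, e) then generates exactly the words
   <w_2,w_1> ... <e,w_n> with A =>* w_1 ... w_n = w, and the new start
   symbol rewrites to (start, f, None) for any f. *)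

Section Yield.
Variables (N T : finType) (G : cfg N T).

Inductive yields : seq (N + T) -> seq T -> Prop :=
| yields_nil : yields [::] [::]
| yields_terminal a s w : yields s w -> yields (inr a :: s) (a :: w)
| yields_nonterminal A rhs s w1 w2 :
    (A, rhs) \in cfg_prods G -> yields rhs w1 -> yields s w2 ->
    yields (inl A :: s) (w1 ++ w2).

Lemma yields_cat x y w1 w2 :
  yields x w1 -> yields y w2 -> yields (x ++ y) (w1 ++ w2).
Proof.
move=> Hx Hy; elim: Hx => [|a s w _ IH|A rhs s u1 u2 Hp Hr _ _ IH] //=.
  exact: yields_terminal.
by rewrite -catA; apply: yields_nonterminal Hp Hr IH.
Qed.

Lemma yields_catP x y w :
  yields (x ++ y) w -> exists w1 w2, [/\ w = w1 ++ w2, yields x w1 & yields y w2].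
Proof.
elim: x w => [|c x IH] w /= Hw.
  by exists [::], w; split => //; constructor.
inversion Hw as [|a s w' Hs|A rhs s w1 w2 Hp Hr Hs]; subst.
  have [w1 [w2 [-> H1 H2]]] := IH _ Hs.
  by exists (a :: w1), w2; split => //; constructor.
have [u1 [u2 [-> K1 K2]]] := IH _ Hs.
exists (w1 ++ u1), u2; rewrite catA; split => //.
exact: yields_nonterminal Hp Hr K1.
Qed.

Lemma yields1P A w :
  yields [:: inl A] w <-> exists2 rhs, (A, rhs) \in cfg_prods G & yields rhs w.
Proof.
split=> [Hw|[rhs Hp Hr]].
  inversion Hw as [|?|? rhs ? w1 w2 Hp Hr Hs]; subst.
  by inversion Hs; subst; exists rhs; rewrite ?cats0.
by rewrite -[w]cats0; apply: yields_nonterminal Hp Hr _; constructor.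
Qed.

Lemma yields_terminals w : yields (map inr w) w.
Proof. by elim: w => [|a w IH] /=; constructor. Qed.

Lemma cfg_derives_cat u v s t :
  cfg_derives G s t -> cfg_derives G (u ++ s ++ v) (u ++ t ++ v).
Proof.
elim=> [x y [u' [v' [A [rhs [Hp [-> ->]]]]]]|x|x y z _ Hxy _ Hyz].
- apply: rt_step; exists (u ++ u'), (v' ++ v), A, rhs.
  by rewrite -!catA.
- exact: rt_refl.
- exact: rt_trans Hxy Hyz.
Qed.

Lemma yields_derives s w : yields s w -> cfg_derives G s (map inr w).
Proof.
elim=> [|a s' w' _ IH|A rhs s' w1 w2 Hp _ IH1 _ IH2].
- exact: rt_refl.
- by have := cfg_derives_cat [:: inr a] [::] IH; rewrite /= !cats0.
- apply: (@rt_trans _ _ _ (rhs ++ s')); first by apply: rt_step; exists [::], s', A, rhs.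
  rewrite map_cat; apply: (@rt_trans _ _ _ (map inr w1 ++ s')).
    by have := cfg_derives_cat [::] s' IH1.
  by have := cfg_derives_cat (map inr w1) [::] IH2; rewrite !cats0.
Qed.

Lemma cfg_step_yields s s' w : cfg_step G s s' -> yields s' w -> yields s w.
Proof.
move=> [u [v [A [rhs [Hp [-> ->]]]]]] Hw.
have [wu [w' [-> Hu Hw']]] := yields_catP Hw.
have [wr [wv [-> Hr Hv]]] := yields_catP Hw'.
by apply: yields_cat => //; apply: yields_nonterminal Hp Hr Hv.
Qed.

Lemma derives_yields s w : cfg_derives G s (map inr w) -> yields s w.
Proof.
suff yields_rt1n t : clos_refl_trans_1n _ (cfg_step G) s t -> t = map inr w -> yields s w.
  by move=> D; apply: yields_rt1n (clos_rt_rt1n _ _ _ _ D) _.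
elim=> [x ->|x y z Hxy _ IH Et]; first exact: yields_terminals.
exact: cfg_step_yields Hxy (IH Et).
Qed.

Lemma cfg_langE w : cfg_lang G w <-> yields [:: inl (cfg_start G)] w.
Proof. by split; [apply: derives_yields | apply: yields_derives]. Qed.

End Yield.

Section NextWord.
Variable S : finType.

Definition lookahead (w : seq S) (e : option S) : option S := head e (map Some w).

Fixpoint next_word_with (w : seq S) (e : option S) : seq (option S * S) :=
  if w is a :: w' then (lookahead w' e, a) :: next_word_with w' e else [::].

Lemma lookahead_cat w1 w2 e : lookahead (w1 ++ w2) e = lookahead w1 (lookahead w2 e).
Proof. by case: w1. Qed.

Lemma next_word_with_cat w1 w2 e :
  next_word_with (w1 ++ w2) e =
  next_word_with w1 (lookahead w2 e) ++ next_word_with w2 e.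
Proof. by elim: w1 => [|a w1 IH] //=; rewrite IH lookahead_cat. Qed.

Lemma next_wordE s : next_word s = next_word_with s None.
Proof.
rewrite /next_word; elim: s None => [|a s IH] e //=.
by case: s IH => [|b s] IH //=; move: (IH e) => /= ->.
Qed.

End NextWord.

Section NextGrammar.
Variables (N S : finType) (G : cfg N S).
Local Notation OS := (option S).
Local Notation NT := (option (N * OS * OS)).
Local Notation sym := (NT + OS * S)%type.

(* [(f, s') \in annotations s e] iff s' refines s with lookaheads that are
   consistent when s is followed by e, f being the lookahead of s' itself. *)
Fixpoint annotations (s : seq (N + S)) (e : OS) : seq (OS * seq sym) :=
  match s with
  | [::] => [:: (e, [::])]
  | inr a :: s1 => [seq (Some a, inr (p.1, a) :: p.2) | p <- annotations s1 e]
  | inl A :: s1 =>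
      flatten [seq [seq (f, inl (Some (A, f, p.1)) :: p.2) | f <- enum {: OS}]
              | p <- annotations s1 e]
  end.

Lemma annotations_nil f e s' : (f, s') \in annotations [::] e -> f = e /\ s' = [::].
Proof. by rewrite inE => /eqP [-> ->]. Qed.

Lemma annotations_terminal a s f e s' :
  (f, s') \in annotations (inr a :: s) e <->
  exists g s1', [/\ f = Some a, s' = inr (g, a) :: s1' & (g, s1') \in annotations s e].
Proof.
split=> /=; first by case/mapP => [[g s1'] Hin [-> ->]]; exists g, s1'.
by case=> g [s1' [-> -> Hin]]; apply/mapP; exists (g, s1').
Qed.

Lemma annotations_nonterminal A s f e s' :
  (f, s') \in annotations (inl A :: s) e <->
  exists g s1', s' = inl (Some (A, f, g)) :: s1' /\ (g, s1') \in annotations s e.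
Proof.
split=> /=.
  by case/flatten_mapP => [[g s1'] Hin] /mapP [f' _ [-> ->]]; exists g, s1'.
case=> g [s1' [-> Hin]]; apply/flatten_mapP; exists (g, s1') => //.
by apply/mapP; exists f; rewrite ?mem_enum.
Qed.

Definition next_prods : seq (NT * seq sym) :=
  [seq (None, [:: inl (Some (cfg_start G, f, None))]) | f <- enum {: OS}] ++
  flatten [seq flatten [seq [seq (Some (p.1, q.1, e), q.2) | q <- annotations p.2 e]
                       | e <- enum {: OS}] | p <- cfg_prods G].

Definition next_cfg : cfg NT (OS * S)%type := CFG None next_prods.

Lemma next_prods_startP r :
  (None, r) \in next_prods <-> exists f, r = [:: inl (Some (cfg_start G, f, None))].
Proof.
rewrite mem_cat; split.
  case/orP; first by case/mapP => f _ [->]; exists f.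
  by case/flatten_mapP => p _ /flatten_mapP [e _] /mapP [q _].
by case=> f ->; apply/orP; left; apply/mapP; exists f; rewrite ?mem_enum.
Qed.

Lemma next_prodsP A f e r :
  (Some (A, f, e), r) \in next_prods <->
  exists2 rhs, (A, rhs) \in cfg_prods G & (f, r) \in annotations rhs e.
Proof.
rewrite mem_cat; split.
  case/orP; first by case/mapP => ? _ [].
  case/flatten_mapP => [[A' rhs] Hp] /flatten_mapP [e' _] /mapP [[f' r'] Hq [-> -> -> ->]].
  by exists rhs.
case=> rhs Hp Hq; apply/orP; right; apply/flatten_mapP; exists (A, rhs) => //.
apply/flatten_mapP; exists e; first by rewrite mem_enum.
by apply/mapP; exists (f, r).
Qed.

Lemma next_cfg_complete s w : yields G s w -> forall e,
  exists2 s', (lookahead w e, s') \in annotations s e & yields next_cfg s' (next_word_with w e).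
Proof.
elim=> [|a s1 w1 _ IH|A rhs s1 w1 w2 Hp _ IH1 _ IH2] e.
- by exists [::]; [rewrite inE | constructor].
- have [s1' H1 H2] := IH e.
  exists (inr (lookahead w1 e, a) :: s1'); last by constructor.
  by apply/annotations_terminal; exists (lookahead w1 e), s1'.
- have [s2' H1 H2] := IH2 e.
  have [s1' K1 K2] := IH1 (lookahead w2 e).
  exists (inl (Some (A, lookahead (w1 ++ w2) e, lookahead w2 e)) :: s2').
    by apply/annotations_nonterminal; exists (lookahead w2 e), s2'.
  rewrite next_word_with_cat; apply: yields_nonterminal K2 H2.
  by apply/next_prodsP; exists rhs; rewrite ?lookahead_cat.
Qed.

Lemma next_cfg_sound s' w' : yields next_cfg s' w' ->
  forall s f e, (f, s') \in annotations s e ->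
  exists w, [/\ w' = next_word_with w e, f = lookahead w e & yields G s w].
Proof.
elim=> [|b s1' w1' _ IH|X r' s1' w1' w2' Hp _ IH1 _ IH2] [|[A|a] s] f e //=.
- by move/annotations_nil => [-> _]; exists [::]; split => //; constructor.
- by move/annotations_nonterminal => [g [s1 [H _]]].
- by move/annotations_terminal => [g [s1 [_ H _]]].
- by move/annotations_nil => [_ H].
- by move/annotations_nonterminal => [g [s1 [H _]]].
- move/annotations_terminal => [g [s1 [-> [Eb Es] H]]]; subst.
  have [w [-> -> Hw]] := IH _ _ _ H.
  by exists (a :: w); split => //; constructor.
- by move/annotations_nil => [_ H].
- move/annotations_nonterminal => [g [s1 [[EX Es] H]]]; subst.
  move/next_prodsP: Hp => [rhs Hp Hr].
  have [u1 [-> -> Hu1]] := IH1 _ _ _ Hr.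
  have [u2 [-> -> Hu2]] := IH2 _ _ _ H.
  exists (u1 ++ u2); rewrite next_word_with_cat lookahead_cat; split => //.
  exact: yields_nonterminal Hp Hu1 Hu2.
- by move/annotations_terminal => [g [s1 [_ H _]]].
Qed.

Lemma next_cfg_yields1P A e w' :
  (exists f, yields next_cfg [:: inl (Some (A, f, e))] w') <->
  exists2 w, w' = next_word_with w e & yields G [:: inl A] w.
Proof.
split=> [[f Hw']|[w -> Hw]].
  have Ha : (f, [:: inl (Some (A, f, e))]) \in annotations [:: inl A] e.
    by apply/annotations_nonterminal; exists e, [::]; rewrite inE.
  by have [w [-> _ Hw]] := next_cfg_sound Hw' Ha; exists w.
have [s' /annotations_nonterminal [g [s1' [-> /annotations_nil [-> ->]]]] Hs'] :=
  next_cfg_complete Hw e.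
by exists (lookahead w e).
Qed.

End NextGrammar.

Theorem lemma3p4 (Sigma : finType) (L : seq Sigma -> Prop) :
  context_free L -> context_free (Next L).
Proof.
case=> N [G HG]; exists (option (N * option Sigma * option Sigma)), (next_cfg G) => w'.
split=> [[s [/HG/cfg_langE Hs ->]] | /cfg_langE/yields1P [r /next_prods_startP [f ->] Hf]].
- have [f Hf] : exists f, yields (next_cfg G) [:: inl (Some (cfg_start G, f, None))]
                                 (next_word_with s None).
    by apply/next_cfg_yields1P; exists s.
  apply/cfg_langE/yields1P; rewrite next_wordE.
  by exists [:: inl (Some (cfg_start G, f, None))] => //; apply/next_prods_startP; exists f.
- have [s -> Hs] : exists2 s, w' = next_word_with s None & yields G [:: inl (cfg_start G)] s.
    by apply/next_cfg_yields1P; exists f.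
  by exists s; rewrite next_wordE; split => //; apply/HG/cfg_langE.
Qed.
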